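(* Let $P,Q$ be lattice paths from $(0,0)$ to $(m,r)$ with $P$ never going above $Q$ and $[P,Q]$ a connected skew shape. Then the edges of the lattice path matroid polytope $\mathcal{P}(M[P,Q])$ correspond to the block-tiled bottoms with exactly $1$ block inside the region $[P,Q]$.
   Context: Lattice paths use steps $E=(1,0)$, $N=(0,1)$. $M[P,Q]$ is the matroid on $[m+r]$ whose bases are the $r$-subsets $B$ such that the lattice path with North steps exactly at positions in $B$ stays between $P$ and $Q$; $\mathcal{P}(M[P,Q])=\mathrm{conv}\{\sum_{b\in B}e_b\}\subseteq\mathbb{R}^{m+r}$. $[P,Q]$ connected means $P,Q$ meet only at $(0,0)$ and $(m,r)$. Each unit box in $[P,Q]$ with lower-left corner $(i,j)$ is labeled $i+j+1$. A block is a border strip (connected nonempty skew shape with no $2\times2$ square) of unit boxes inside $[P,Q]$, regarded as a labeled tableau; clones are blocks equal as labeled tableaux, differing only in position. An outside corner of $[P,Q]$ is a corner $NE$ on $P$ or a corner $EN$ on $Q$. For lattice paths $\lambda,\mu$ from $(0,0)$ to $(m,r)$ in $[P,Q]$ with $\lambda$ never above $\mu$ and a tiling $\tau$ of the boxes of $[\lambda,\mu]$, $[\lambda,\mu]_\tau$ is a block-tiled region if: (1) each maximal continuous intersection of $\lambda$ and $\mu$ passes through an outside corner or an end point of $[P,Q]$; (2) $\tau$ tiles all boxes of $[\lambda,\mu]$ by blocks without gaps or overlaps; (3) any two blocks of $\tau$ containing boxes with the same label are clones. A block-tiled band is a block-tiled region containing no $2\times2$ square. Block-tiled bands are in the same family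 if their sets of maximal continuous intersections and of clones constituting them are the same. A block-tiled bottom is a block-tiled band that is the lowest among the block-tiled bands in its family. *)

From HB Require Import structures.
From mathcomp Require Import all_boot all_order all_algebra.
Import Order.TTheory GRing.Theory Num.Theory.

(* A lattice path from (0,0) to (m,r) with steps E=(1,0), N=(0,1) is encoded
   by the set B : {set 'I_(m+r)} of (0-indexed) positions of its North steps,
   with #|B| = r.  After k steps the path is at the lattice point
   (k - ht B k, ht B k) on the anti-diagonal x + y = k. *)

Section LatticePaths.
Variables m r : nat.

Definition lpath := {set 'I_(m + r)}.

Definition ht (B : lpath) (k : nat) : nat := #|[set i in B | i < k]|.

Definition Nstep (B : lpath) (k : nat) : bool := [exists i in B, val i == k].

Definition below (A B : lpath) : bool :=
  [forall k : 'I_(m + r).+1, ht A k <= ht B k].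

(* P and Q meet only at (0,0) and (m,r) *)
Definition connected_PQ (P Q : lpath) : Prop :=
  forall k : nat, 0 < k < m + r -> ht P k < ht Q k.

(* unit boxes: lower-left corner (i,j), 0 <= i < m, 0 <= j < r *)
Definition box := ('I_m * 'I_r)%type.
Definition label (b : box) : nat := (b.1 + b.2).+1.

Definition region (A B : lpath) : {set box} :=
  [set b : box | (ht A (label b) <= b.2) && (b.2 < ht B (label b))].

Definition adj (a b : box) : bool :=
  ((a.1 == b.1 :> nat) && ((a.2.+1 == b.2 :> nat) || (b.2.+1 == a.2 :> nat)))
  || ((a.2 == b.2 :> nat) && ((a.1.+1 == b.1 :> nat) || (b.1.+1 == a.1 :> nat))).

Definition connected_boxes (S : {set box}) : bool :=
  (S != set0) &&
  [forall a in S, forall b in S,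
     connect (fun x y => [&& x \in S, y \in S & adj x y]) a b].

Definition skew_shape (S : {set box}) : Prop :=
  exists A B : lpath, [/\ #|A| = r, #|B| = r, below A B & S = region A B].

Definition inS (S : {set box}) (i j : nat) : bool :=
  [exists b in S, (b.1 == i :> nat) && (b.2 == j :> nat)].

Definition has_square (S : {set box}) : bool :=
  [exists b in S, [&& inS S b.1.+1 b.2, inS S b.1 b.2.+1 & inS S b.1.+1 b.2.+1]].

Definition is_block (P Q : lpath) (S : {set box}) : Prop :=
  [/\ S \subset region P Q, connected_boxes S, skew_shape S & ~~ has_square S].

Definition inZ (S : {set box}) (x y : int) : bool :=
  [exists b in S, (x == Posz (b.1 : nat)) && (y == Posz (b.2 : nat))].

(* clones: equal as labeled tableaux, i.e. translates of each other by a
   vector (d,-d) (translations preserving the labels i+j+1) *)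
Definition clone (S T : {set box}) : Prop :=
  exists d : int, forall x y : int, inZ T x y = inZ S (x - d)%R (y + d)%R.

(* [a,b] is a maximal interval of anti-diagonals on which A and B share
   their lattice point: a maximal continuous intersection of A and B *)
Definition maxint (A B : lpath) (a b : nat) : Prop :=
  [/\ a <= b <= m + r,
      (forall k, a <= k <= b -> ht A k = ht B k),
      (a = 0 \/ ht A a.-1 <> ht B a.-1) &
      (b = m + r \/ ht A b.+1 <> ht B b.+1)].

(* the point of A on anti-diagonal k is an end point of [P,Q] or an outside
   corner of [P,Q] (a corner NE on P or a corner EN on Q) *)
Definition good_point (P Q A : lpath) (k : nat) : Prop :=
  k = 0 \/ k = m + r \/
  (0 < k < m + r /\
   ((ht P k = ht A k /\ Nstep P k.-1 /\ ~~ Nstep P k) \/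
    (ht Q k = ht A k /\ ~~ Nstep Q k.-1 /\ Nstep Q k))).

Definition comp (A : lpath) (a b : nat) : seq (nat * nat) :=
  [seq (k - ht A k, ht A k) | k <- iota a (b - a).+1].

Definition block_tiled_region (P Q A B : lpath) (tau : {set {set box}}) : Prop :=
  [/\ [/\ #|A| = r, #|B| = r, below P A, below B Q & below A B],
      (forall a b, maxint A B a b -> exists k, a <= k <= b /\ good_point P Q A k),
      [/\ (forall S, S \in tau -> is_block P Q S),
          (forall S T, S \in tau -> T \in tau -> S != T -> [disjoint S & T]) &
          \bigcup_(S in tau) S = region A B] &
      (forall S T, S \in tau -> T \in tau ->
         (exists a b, [/\ a \in S, b \in T & label a = label b]) -> clone S T)].

Definition block_tiled_band (P Q A B : lpath) (tau : {set {set box}}) : Prop :=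
  block_tiled_region P Q A B tau /\ ~~ has_square (region A B).

Definition same_family (A B : lpath) (tau : {set {set box}})
    (A' B' : lpath) (tau' : {set {set box}}) : Prop :=
  (forall s, (exists a b, maxint A B a b /\ s = comp A a b) <->
             (exists a b, maxint A' B' a b /\ s = comp A' a b)) /\
  (forall S, S \in tau -> exists2 S', S' \in tau' & clone S S') /\
  (forall S', S' \in tau' -> exists2 S, S \in tau & clone S S').

Definition block_tiled_bottom (P Q A B : lpath) (tau : {set {set box}}) : Prop :=
  block_tiled_band P Q A B tau /\
  forall A' B' tau', block_tiled_band P Q A' B' tau' ->
    same_family A B tau A' B' tau' -> below A A' /\ below B B'.

Definition bases (P Q : lpath) : {set lpath} :=
  [set B : lpath | [&& #|B| == r, below P B & below B Q]].

Variable R : realFieldType.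
Local Open Scope ring_scope.

Definition vertex (B : lpath) : 'rV[R]_(m + r) :=
  \row_i (if i \in B then 1 else 0).

Definition lpm_polytope (P Q : lpath) (x : 'rV[R]_(m + r)) : Prop :=
  exists c : lpath -> R,
    [/\ forall B, 0 <= c B,
        \sum_(B in bases P Q) c B = 1 &
        x = \sum_(B in bases P Q) c B *: vertex B].

Definition dotv (w x : 'rV[R]_(m + r)) : R := \sum_i w 0 i * x 0 i.

Definition is_face (Pol F : 'rV[R]_(m + r) -> Prop) : Prop :=
  exists w : 'rV[R]_(m + r), forall x,
    F x <-> (Pol x /\ forall y, Pol y -> dotv w y <= dotv w x).

Definition segment (u v : 'rV[R]_(m + r)) (x : 'rV[R]_(m + r)) : Prop :=
  exists t : R, [/\ 0 <= t, t <= 1 & x = t *: u + (1 - t) *: v].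

Definition is_edge (Pol F : 'rV[R]_(m + r) -> Prop) : Prop :=
  is_face Pol F /\ exists u v, u != v /\ forall x, F x <-> segment u v x.

End LatticePaths.

From Pilot Require Import Defs.
From HB Require Import structures.
From mathcomp Require Import all_boot all_order all_algebra.
From mathcomp Require Import zify ring lra.
Import Order.TTheory GRing.Theory Num.Theory.

(* A block-tiled bottom with a single block is a ribbon: a region [A, B]
   between two bases in which B runs one step above A exactly on the
   anti-diagonals i < k <= j, i.e. B = A - j + i.  Indeed a block is connected
   and contains no 2x2 square.  Conversely a ribbon is a bottom: a band of the
   same family has the same maximal intersections (the anti-diagonals outside
   (i, j]) and contains a translate of the ribbon along the anti-diagonals,
   which these intersections force to be trivial.

   If [A, B] is a ribbon then |A :&: B| = r - 1, so the linear form
   <e_A + e_B, .> is 2r - 1 at e_A and e_B and at most 2r - 2 at every other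
   vertex: the segment [e_A, e_B] is an edge.  Conversely, on an edge
   [e_A, e_B] no other pair of vertices has sum e_A + e_B.  Let i be the first
   step where A and B separate, say with B above A, and j the last step before
   they meet again: C = A - j + i and D = B - i + j are bases with
   e_C + e_D = e_A + e_B, hence C = B and [A, B] is a ribbon. *)

Set Implicit Arguments.
Unset Strict Implicit.
Unset Printing Implicit Defensive.

Lemma bigD2 (V : nmodType) (I : finType) (S : {pred I}) (F : I -> V) a b :
  a \in S -> b \in S -> a != b ->
  (\sum_(i in S) F i = F a + F b + \sum_(i in S | (i != a) && (i != b)) F i)%R.
Proof.
move=> aS bS neq_ab; rewrite (bigD1 a) //= (bigD1 b) /=; last by rewrite bS eq_sym.
by rewrite addrA; congr (_ + _)%R; apply: eq_bigl => i; rewrite andbA.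
Qed.

Lemma cardI_lt (T : finType) (A C : {set T}) :
  #|A| = #|C| -> A != C -> #|A :&: C| < #|A|.
Proof.
move=> eq_card neq_AC; rewrite ltn_neqAle subset_leq_card ?subsetIl // andbT.
apply: contra neq_AC => /eqP eqI; have AC : A \subset C.
  by apply/setIidPl/eqP; rewrite eqEcard subsetIl eqI leqnn.
by rewrite eqEcard AC eq_card leqnn.
Qed.

Lemma setD1U1K (T : finType) (B : {set T}) (i j : T) : i \in B -> j \notin B ->
  i |: ((j |: (B :\ i)) :\ j) = B.
Proof.
move=> iB jNB; apply/setP => k; rewrite !inE.
case: (eqVneq k i) => [->|_] //=.
by case: (eqVneq k j) => [->|_] //=; rewrite (negbTE jNB).
Qed.

Lemma convex_max_support (R : realDomainType) (I : finType) (S : {pred I})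
    (c f : I -> R) (M : R) :
  (forall i, (0 <= c i)%R) -> (\sum_(i in S) c i)%R = 1%R ->
  (forall i, i \in S -> c i != 0%R -> (f i <= M)%R) ->
  (\sum_(i in S) c i * f i)%R = M ->
  forall i, i \in S -> c i != 0%R -> f i = M.
Proof.
move=> c_ge0 c_sum f_le f_sum.
have term0 : forall i, i \in S -> (c i * (M - f i) = 0)%R.
  apply: psumr_eq0P => [i iS|].
    have [->|ci] := eqVneq (c i) 0%R; first by rewrite mul0r.
    by rewrite mulr_ge0 // subr_ge0 f_le.
  under eq_bigr => i _ do rewrite mulrBr.
  by rewrite sumrB -mulr_suml c_sum mul1r f_sum subrr.
move=> i iS ci; apply/eqP; rewrite eq_sym -subr_eq0.
by have /eqP := term0 i iS; rewrite mulf_eq0 (negbTE ci).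
Qed.

Section Heights.
Variables m r : nat.
Implicit Types X A B C : lpath m r.
Local Notation ht := (Defs.ht m r).
Local Notation below := (Defs.below m r).

Lemma ht0 X : ht X 0 = 0.
Proof. by apply: eq_card0 => i; rewrite !inE ltn0 andbF. Qed.

Lemma htS X (i : 'I_(m + r)) : ht X i.+1 = ht X i + (i \in X).
Proof.
rewrite /ht (cardsD1 i) addnC !inE ltnSn andbT; congr (_ + _).
apply: eq_card => k; rewrite !inE ltnS leq_eqVlt (inj_eq val_inj).
by case: eqVneq => [->|] //=; rewrite ltnn andbF.
Qed.

Lemma ht_end X k : m + r <= k -> ht X k = #|X|.
Proof.
by move=> le_nk; apply: eq_card => i; rewrite !inE (leq_trans (ltn_ord i) le_nk) andbT.
Qed.

Lemma ht_card X k : ht X k <= #|X|.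
Proof. by apply/subset_leq_card/subsetP => i; rewrite inE => /andP[]. Qed.

Lemma ht_mono X k l : k <= l -> ht X k <= ht X l.
Proof.
move=> le_kl; apply/subset_leq_card/subsetP => i.
by rewrite !inE => /andP[-> /leq_trans->].
Qed.

Lemma htS_le X k : ht X k.+1 <= (ht X k).+1.
Proof.
have [lt_kn|le_nk] := ltnP k (m + r); last by rewrite !ht_end // (leq_trans le_nk).
by rewrite (htS X (Ordinal lt_kn)) -addn1 leq_add2l leq_b1.
Qed.

Lemma ht_addn X k d : ht X (k + d) <= ht X k + d.
Proof.
elim: d => [|d IHd]; first by rewrite !addn0.
by rewrite !addnS (leq_trans (htS_le X _)).
Qed.

Lemma ht_le X k : ht X k <= k.
Proof. by have := ht_addn X 0 k; rewrite ht0. Qed.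

Lemma sub_ht_le X k : #|X| = r -> k <= m + r -> k - ht X k <= m.
Proof.
move=> cardX le_kn; have := ht_addn X k (m + r - k).
by rewrite subnKC // ht_end // cardX; lia.
Qed.

Lemma eq_ht A B : (forall k, k <= m + r -> ht A k = ht B k) -> A = B.
Proof.
move=> eqAB; apply/setP => i; have := htS B i.
rewrite -!eqAB ?(ltnW (ltn_ord i)) // htS => /eqP; rewrite eqn_add2l.
by case: (i \in A); case: (i \in B).
Qed.

Lemma ht_setU1 X (i : 'I_(m + r)) k :
  i \notin X -> ht (i |: X) k = ht X k + (i < k).
Proof.
move=> iNX; rewrite /ht; have [lt_ik|le_ki] := ltnP i k.
  rewrite (cardsD1 i) !inE eqxx lt_ik add1n addn1; congr _.+1.
  by apply: eq_card => j; rewrite !inE; case: eqVneq => [->|] //=; rewrite (negbTE iNX).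
rewrite addn0; apply: eq_card => j; rewrite !inE.
by case: eqVneq => [->|] //=; rewrite (negbTE iNX) ltnNge le_ki.
Qed.

Lemma ht_setD1 X (i : 'I_(m + r)) k :
  i \in X -> ht (X :\ i) k + (i < k) = ht X k.
Proof.
move=> iX; rewrite /ht [in RHS](cardsD1 i) !inE iX /= addnC; congr (_ + _).
by apply: eq_card => j; rewrite !inE andbA.
Qed.

Lemma ht_lt_step A B k :
  ht A k < ht B k -> ht A k.+1 != ht B k.+1 -> ht A k.+1 < ht B k.+1.
Proof.
move=> ltAB neAB; rewrite ltn_neqAle neAB.
exact: leq_trans (htS_le A k) (leq_trans ltAB (ht_mono B (leqnSn k))).
Qed.

Lemma belowP A B : reflect (forall k, k <= m + r -> ht A k <= ht B k) (below A B).
Proof.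
apply: (iffP forallP) => [AB k le_kn|AB k]; last exact: AB (ltn_ord k).
exact: AB (Ordinal (le_kn : k < (m + r).+1)).
Qed.

Lemma below_trans A B C : below A B -> below B C -> below A C.
Proof.
move=> /belowP AB /belowP BC; apply/belowP => k le_kn.
exact: leq_trans (AB k le_kn) (BC k le_kn).
Qed.

Lemma below_anti A B : below A B -> below B A -> A = B.
Proof.
move=> /belowP AB /belowP BA; apply: eq_ht => k le_kn.
by apply/eqP; rewrite eqn_leq AB ?BA.
Qed.

Lemma ht_lt_bound A B k : #|A| = r -> #|B| = r -> ht A k < ht B k -> k < m + r.
Proof.
move=> cardA cardB ltAB; rewrite ltnNge; apply/negP => le_nk.
by move: ltAB; rewrite !ht_end // cardA cardB ltnn.
Qed.

Lemma ht_split A B : A != B ->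
  exists i, ht A i = ht B i /\ (ht B i.+1 = (ht A i.+1).+1 \/ ht A i.+1 = (ht B i.+1).+1).
Proof.
move=> neq_AB; have ex_k : exists k, ht A k != ht B k.
  have /existsP[k neq_k] : [exists k : 'I_(m + r).+1, ht A k != ht B k].
    apply: contraR neq_AB => /existsPn eqAB; apply/eqP/eq_ht => k le_kn.
    by apply/eqP; rewrite -[_ == _]negbK (eqAB (Ordinal (le_kn : k < (m + r).+1))).
  by exists k.
have [k neq_k min_k] := ex_minnP ex_k.
have k_gt0 : 0 < k by move: neq_k; case: (k) => //; rewrite !ht0.
have eq_k1 : ht A k.-1 = ht B k.-1.
  by apply/eqP/negPn/negP => /min_k; rewrite leqNgt ltn_predL k_gt0.
exists k.-1; rewrite prednK //; split=> //.
have := htS_le A k.-1; have := htS_le B k.-1.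
have := ht_mono A (leq_pred k); have := ht_mono B (leq_pred k).
by rewrite prednK //; move: neq_k; lia.
Qed.

Lemma ht_meet_after A B i : #|A| = r -> #|B| = r ->
  ht A i = ht B i -> ht B i.+1 = (ht A i.+1).+1 ->
  exists i' j' : 'I_(m + r),
    [/\ val i' = i, i' < j', [/\ i' \notin A, i' \in B, j' \in A & j' \notin B] &
        forall k, i < k <= j' -> ht A k < ht B k].
Proof.
move=> cardA cardB eq_i ltS.
have lt_in : i < m + r by apply/ltnW/(ht_lt_bound cardA cardB); rewrite ltS.
pose i' := Ordinal lt_in; have := htS A i'; have := htS B i'; rewrite /= ltS eq_i => SB SA.
have iNA : i' \notin A by apply/negP => iA; move: SA SB; rewrite iA; lia.
have iB : i' \in B by apply/negPn/negP => /negbTE iNB; move: SA SB; rewrite iNB; lia.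
have meet : exists k, (i < k) && (ht A k == ht B k).
  by exists (m + r); rewrite lt_in !ht_end // cardA cardB eqxx.
have [k0 /andP[lt_ik0 /eqP eq_k0] min_k0] := ex_minnP meet.
have lt_ij : i < k0.-1.
  suff : i.+1 != k0 by lia.
  by apply: contra_eqN eq_k0 => /eqP<-; rewrite ltS; lia.
have between k : i < k <= k0.-1 -> ht A k < ht B k.
  elim: k => [//|k IHk] /andP[lt_ik le_kj].
  have [->|neq_ki] := eqVneq k i; first by rewrite ltS.
  apply: ht_lt_step; first by apply: IHk; apply/andP; split; lia.
  by apply/negP => eq_k1; have := min_k0 k.+1; rewrite lt_ik eq_k1 => /(_ isT); lia.
have ltj : ht A k0.-1 < ht B k0.-1 by apply: between; rewrite lt_ij leqnn.
pose j' := Ordinal (ht_lt_bound cardA cardB ltj).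
have := htS A j'; have := htS B j'; rewrite /= prednK ?eq_k0; last by lia.
move=> SBj SAj.
have jA : j' \in A by apply/negPn/negP => /negbTE jNA; move: SAj SBj; rewrite jNA; lia.
have jNB : j' \notin B by apply/negP => jB; move: SAj SBj; rewrite jB; lia.
by exists i', j'.
Qed.

End Heights.

Section Boxes.
Variables m r : nat.
Implicit Types A B : lpath m r.
Local Notation ht := (Defs.ht m r).
Local Notation below := (Defs.below m r).
Local Notation region := (Defs.region m r).
Local Notation box := (Defs.box m r).
Local Notation label := (Defs.label m r).
Local Notation has_square := (Defs.has_square m r).
Local Notation inS := (Defs.inS m r).
Local Notation adj := (Defs.adj m r).

Lemma box_eq (a b : box) : a.1 = b.1 :> nat -> a.2 = b.2 :> nat -> a = b.
Proof. by case: a b => [a1 a2] [b1 b2] /= /val_inj-> /val_inj->. Qed.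

Lemma exists_box x y : x < m -> y < r -> exists b : box, b.1 = x :> nat /\ b.2 = y :> nat.
Proof. by move=> lt_xm lt_yr; exists (Ordinal lt_xm, Ordinal lt_yr). Qed.

Lemma label_lt (b : box) : label b < m + r.
Proof. by have := ltn_ord b.1; have := ltn_ord b.2; rewrite /label; lia. Qed.

Lemma in_region A B b :
  (b \in region A B) = (ht A (label b) <= b.2) && (b.2 < ht B (label b)).
Proof. by rewrite inE. Qed.

Lemma inS_region A B x y : x < m -> y < r ->
  inS (region A B) x y = (ht A (x + y).+1 <= y) && (y < ht B (x + y).+1).
Proof.
move=> lt_xm lt_yr; apply/existsP/idP => [[b /andP[]]|inAB].
  by rewrite in_region => inAB /andP[/eqP<- /eqP<-].
have [b [bx yb]] := exists_box lt_xm lt_yr.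
by exists b; rewrite in_region /label bx yb inAB !eqxx.
Qed.

Lemma region_ht_lt A B b : b \in region A B -> ht A (label b) < ht B (label b).
Proof. by rewrite in_region => /andP[]; apply: leq_ltn_trans. Qed.

Lemma box_at A B k : #|A| = r -> #|B| = r -> ht A k < ht B k ->
  exists2 b, b \in region A B & label b = k /\ b.2 = ht A k :> nat.
Proof.
move=> cardA cardB ltAB; have lt_kn := ht_lt_bound cardA cardB ltAB.
have xA := sub_ht_le cardA (ltnW lt_kn).
have leBk := ht_le B k; have leBr := ht_card B k.
have [b [b1 b2]] : exists b : box, b.1 = k.-1 - ht A k :> nat /\ b.2 = ht A k :> nat.
  by apply: exists_box; lia.
have lab : label b = k by rewrite /label b1 b2; lia.
by exists b; rewrite ?in_region lab b2 ?leqnn.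
Qed.

Lemma no_square_ht A B k : ~~ has_square (region A B) -> #|A| = r -> #|B| = r ->
  ht B k <= (ht A k).+1.
Proof.
move=> noSq cardA cardB; rewrite leqNgt; apply/negP => ltAB2.
have lt_kn := ht_lt_bound cardA cardB (ltn_trans (ltnSn _) ltAB2).
have xA := sub_ht_le cardA (ltnW lt_kn).
have leBk := ht_le B k; have leBr := ht_card B k.
have A1 := htS_le A k; have A2 := ht_mono A (leq_pred k).
have B1 := htS_le B k.-1; have B2 := ht_mono B (leqnSn k).
rewrite prednK in B1; last by lia.
have [h Eh] : {h | ht A k = h} by exists (ht A k).
rewrite Eh in ltAB2 xA A1 A2.
(* the boxes with lower-left corners (k-2-h, h), (k-1-h, h), (k-2-h, h+1)
   and (k-1-h, h+1) form a square in [region A B] *)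
have [b [b1 b2]] : exists b : box, b.1 = k - 2 - h :> nat /\ b.2 = h :> nat.
  by apply: exists_box; lia.
move/existsP: noSq; apply; exists b.
rewrite in_region /label b1 b2 !inS_region; try lia.
have -> : (k - 2 - h + h).+1 = k.-1 by lia.
have -> : (k - 2 - h).+1 + h = k.-1 by lia.
have -> : k - 2 - h + h.+1 = k.-1 by lia.
have -> : (k - 2 - h).+1 + h.+1 = k by lia.
by rewrite prednK ?Eh; try lia; apply/and4P; split; lia.
Qed.

Lemma region_sub A B C D : below A C -> below D B ->
  region C D \subset region A B.
Proof.
move=> /belowP AC /belowP DB; apply/subsetP => b; rewrite !in_region => /andP[Cb bD].
have le_ln := ltnW (label_lt b).
by rewrite (leq_trans (AC _ le_ln) Cb) (leq_trans bD (DB _ le_ln)).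
Qed.

Lemma adj_sym a b : adj a b = adj b a.
Proof. by rewrite /adj; do ![case: eqP => ?] => //=; lia. Qed.

Lemma adj_label a b : adj a b -> label b = (label a).+1 \/ label a = (label b).+1.
Proof. by rewrite /adj /label => /orP[] /andP[/eqP ? /orP[] /eqP ?]; lia. Qed.

Lemma adj_next a b : label b = (label a).+1 ->
  b.2 = a.2 :> nat \/ b.2 = a.2.+1 :> nat -> adj a b.
Proof.
rewrite /adj /label => lab [] b2; apply/orP; [right|left]; apply/andP;
  by split; [|apply/orP; left]; apply/eqP; lia.
Qed.

Lemma path_label_lt (S : {set box}) k x p :
  (forall z, z \in S -> label z != k) -> label x < k ->
  path (fun x y => [&& x \in S, y \in S & adj x y]) x p -> label (last x p) < k.
Proof.
move=> noK; elim: p x => [//|y p IHp] x lt_xk /= /andP[/and3P[_ yS /adj_label lab] ypath].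
by apply: IHp ypath; have := noK y yS; case: lab; lia.
Qed.

End Boxes.

Section Ribbons.
Variables m r : nat.
Implicit Types A B : lpath m r.
Local Notation ht := (Defs.ht m r).
Local Notation below := (Defs.below m r).
Local Notation region := (Defs.region m r).
Local Notation label := (Defs.label m r).
Local Notation has_square := (Defs.has_square m r).
Local Notation adj := (Defs.adj m r).

(* [region A B] is then a single ribbon, with labels i + 1, ..., j. *)
Definition ribbon A B i j :=
  i < j < m + r /\ forall k, ht B k = ht A k + (i < k <= j).

Lemma ribbon_exchange A (i j : 'I_(m + r)) : i < j -> i \notin A -> j \in A ->
  ribbon A (i |: (A :\ j)) i j.
Proof.
move=> lt_ij iNA jA; split=> [|k]; first by rewrite lt_ij ltn_ord.
rewrite ht_setU1 ?inE ?(negbTE iNA) ?andbF // -(ht_setD1 k jA).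
by case: (ltnP i k) => ?; case: (ltnP j k) => ? /=; lia.
Qed.

Lemma ribbon_setE A B i j : ribbon A B i j ->
  exists i' j' : 'I_(m + r),
    [/\ val i' = i, val j' = j, i' \notin A, j' \in A & B = i' |: (A :\ j')].
Proof.
move=> [/andP[lt_ij lt_jn] htB].
pose i' := Ordinal (ltn_trans lt_ij lt_jn); pose j' := Ordinal lt_jn.
have iNA : i' \notin A.
  apply/negP => iA; move: (htS A i') (htS B i').
  by rewrite !htB /= iA leqnn ltnn lt_ij; case: (i' \in B); lia.
have jA : j' \in A.
  apply/negPn/negP => jNA; move: (htS A j') (htS B j').
  by rewrite !htB /= (negbTE jNA) ltnn lt_ij leqnn; case: (j' \in B); lia.
exists i', j'; split=> //; apply: eq_ht => k _.
by have [_ ->] := @ribbon_exchange A i' j' lt_ij iNA jA; rewrite htB.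
Qed.

Lemma ribbon_cardI A B i j : ribbon A B i j -> #|A :&: B|.+1 = #|A|.
Proof.
case/ribbon_setE => i' [j' [_ _ iNA jA ->]].
have -> : A :&: (i' |: (A :\ j')) = A :\ j'.
  apply/setP => k; rewrite !inE.
  case: eqVneq => [->|_] /=; first by rewrite (negbTE iNA) andbF.
  by case: (k \in A); rewrite ?andbT ?andbF.
by rewrite [in RHS](cardsD1 j' A) jA.
Qed.

Lemma ribbon_card A B i j : ribbon A B i j -> #|B| = #|A|.
Proof.
case=> /andP[_ lt_jn] htB; move: (htB (m + r)).
by rewrite !ht_end // [m + r <= j]leqNgt lt_jn andbF addn0.
Qed.

Lemma ribbon_below A B i j : ribbon A B i j -> below A B.
Proof. by case=> _ htB; apply/belowP => k _; rewrite htB leq_addr. Qed.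

Lemma ribbon_neq A B i j : ribbon A B i j -> A != B.
Proof.
case=> /andP[lt_ij _] htB; apply/eqP => eqAB; move: (htB j).
by rewrite eqAB lt_ij leqnn; lia.
Qed.

Lemma ribbon_ht_eq A B i j k : ribbon A B i j -> (ht A k == ht B k) = ~~ (i < k <= j).
Proof.
by case=> _ ->; case: (i < k <= j); rewrite ?addn0 ?eqxx // addn1 -[_ == _]negbK neq_ltn ltnSn.
Qed.

Lemma ribbon_region A B i j b : ribbon A B i j ->
  (b \in region A B) = (i < label b <= j) && (b.2 == ht A (label b) :> nat).
Proof.
case=> _ htB; rewrite in_region htB eq_sym eqn_leq.
by case: (i < label b <= j); rewrite ?addn1 ?addn0 ?ltnS //= ltnNge andbN.
Qed.

Lemma ribbon_label_inj A B i j a b : ribbon A B i j ->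
  a \in region A B -> b \in region A B -> label a = label b -> a = b.
Proof.
move=> rAB; rewrite !(ribbon_region _ rAB) => /andP[_ /eqP a2] /andP[_ /eqP b2] lab.
have e2 : a.2 = b.2 :> nat by rewrite a2 b2 lab.
by apply: box_eq => //; move: lab; rewrite /label e2 => /succn_inj /addIn.
Qed.

Lemma ribbon_no_square A B i j : ribbon A B i j -> ~~ has_square (region A B).
Proof.
move=> rAB; apply/existsP => -[b /andP[_ /and3P[/existsP[c] c_pos]]].
move: c_pos => /andP[c_in /andP[/eqP c1 /eqP c2]].
move=> /existsP[d /andP[d_in /andP[/eqP d1 /eqP d2]]] _.
have lab : label c = label d by rewrite /label c1 c2 d1 d2 addnS.
by move: (ribbon_label_inj rAB c_in d_in lab) c2 d2 => ->; lia.
Qed.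

Lemma ribbon_succ A B i j a : #|A| = r -> #|B| = r -> ribbon A B i j ->
  a \in region A B -> label a < j ->
  exists2 b, b \in region A B & label b = (label a).+1 /\ adj a b.
Proof.
move=> cardA cardB rAB a_in lt_aj; have [_ htB] := rAB.
move: (a_in); rewrite (ribbon_region _ rAB) => /andP[/andP[lt_ia _] /eqP a2].
have ltS : ht A (label a).+1 < ht B (label a).+1.
  by rewrite htB ltnS (ltnW lt_ia) lt_aj addn1.
have [b b_in [lab b2]] := box_at cardA cardB ltS.
exists b => //; split=> //; apply: adj_next => //.
rewrite a2 b2; have := htS_le A (label a); have := ht_mono A (leqnSn (label a)).
lia.
Qed.

Lemma ribbon_connected A B i j : #|A| = r -> #|B| = r -> ribbon A B i j ->
  connected_boxes m r (region A B).
Proof.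
move=> cardA cardB rAB; have [/andP[lt_ij _] htB] := rAB.
set S := region A B; set e := fun x y => [&& x \in S, y \in S & adj x y].
have e_sym : connect_sym e.
  by apply: sym_connect_sym => x y; rewrite /e adj_sym andbCA.
have e_up n a b : a \in S -> b \in S -> label a + n = label b -> connect e a b.
  elim: n a => [|n IHn] a a_in b_in lab.
    by rewrite -(ribbon_label_inj rAB a_in b_in) ?connect0 // -lab addn0.
  have lt_aj : label a < j.
    by move: b_in; rewrite /S (ribbon_region _ rAB) -lab => /andP[/andP[_ le_j] _]; lia.
  have [a' a'_in [lab' adj_aa']] := ribbon_succ cardA cardB rAB a_in lt_aj.
  apply: connect_trans (connect1 _) (IHn a' a'_in b_in _); first by rewrite /e a_in a'_in.
  by rewrite lab' addSnnS.
apply/andP; split.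
  have ltj : ht A j < ht B j by rewrite htB lt_ij leqnn addn1.
  by have [b b_in _] := box_at cardA cardB ltj; apply/set0Pn; exists b.
apply/forallP => a; apply/implyP => a_in; apply/forallP => b; apply/implyP => b_in.
have [le_ab|/ltnW le_ba] := leqP (label a) (label b).
  by apply: e_up (subnKC le_ab).
by rewrite e_sym; apply: e_up (subnKC le_ba).
Qed.

End Ribbons.

Section Bases.
Variables (m r : nat) (P Q : lpath m r).
Implicit Types A B C D : lpath m r.
Local Notation ht := (Defs.ht m r).
Local Notation below := (Defs.below m r).
Local Notation bases := (Defs.bases m r P Q).

Lemma basesP C : reflect [/\ #|C| = r, below P C & below C Q] (C \in bases).
Proof. by rewrite inE; apply: (iffP and3P) => -[/eqP ? ? ?]; split=> //; apply/eqP. Qed.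

Lemma exchange_bases A B (i j : 'I_(m + r)) : A \in bases -> B \in bases -> i < j ->
  [/\ i \notin A, i \in B, j \in A & j \notin B] ->
  (forall k, i < k <= j -> ht A k < ht B k) ->
  i |: (A :\ j) \in bases /\ j |: (B :\ i) \in bases.
Proof.
move=> /basesP[cardA /belowP PA /belowP AQ] /basesP[cardB /belowP PB /belowP BQ].
move=> lt_ij [iNA iB jA jNB] between.
have rAC := ribbon_exchange lt_ij iNA jA; have [_ htC] := rAC.
have neq_ij : i != j by apply: contraNneq iNA => ->.
have iND : i \notin j |: (B :\ i) by rewrite !inE eqxx (negbTE neq_ij).
have jD : j \in j |: (B :\ i) by rewrite !inE eqxx.
have rDB := ribbon_exchange lt_ij iND jD; rewrite setD1U1K // in rDB; have [_ htB] := rDB.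
split; apply/basesP; split.
- by rewrite (ribbon_card rAC).
- apply/belowP => k le_kn; rewrite htC; exact: leq_trans (PA k le_kn) (leq_addr _ _).
- apply/belowP => k le_kn; rewrite htC.
  case/boolP: (i < k <= j) => [/between lt_AB|_]; last by rewrite addn0 AQ.
  by rewrite addn1 (leq_trans lt_AB (BQ k le_kn)).
- by rewrite -(ribbon_card rDB).
- apply/belowP => k le_kn; have := PB k le_kn; have := PA k le_kn; rewrite htB.
  by case/boolP: (i < k <= j) => [/between|_]; rewrite ?htB; lia.
- by apply/belowP => k le_kn; apply: leq_trans (BQ k le_kn); rewrite htB leq_addr.
Qed.

End Bases.

Section Vertices.
Variables (m r : nat) (R : realFieldType).
Implicit Types A B C D : lpath m r.
Local Open Scope ring_scope.
Local Notation vertex := (Defs.vertex m r R).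
Local Notation dotv := (Defs.dotv m r R).
Local Notation segment := (Defs.segment m r R).
Local Notation row := 'rV[R]_(m + r).

Lemma dotvDl (u v x : row) : dotv (u + v) x = dotv u x + dotv v x.
Proof. by rewrite /dotv -big_split; apply: eq_bigr => i _; rewrite mxE mulrDl. Qed.

Lemma dotvDr w (x y : row) : dotv w (x + y) = dotv w x + dotv w y.
Proof. by rewrite /dotv -big_split; apply: eq_bigr => i _; rewrite mxE mulrDr. Qed.

Lemma dotvZr w a (x : row) : dotv w (a *: x) = a * dotv w x.
Proof. by rewrite /dotv mulr_sumr; apply: eq_bigr => i _; rewrite mxE mulrCA. Qed.

Lemma dotv_sumr (I : finType) (S : {pred I}) w (c : I -> R) (f : I -> row) :
  dotv w (\sum_(i in S) c i *: f i) = \sum_(i in S) c i * dotv w (f i).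
Proof.
rewrite /dotv; under eq_bigr => k _ do rewrite summxE mulr_sumr.
rewrite exchange_big /=; apply: eq_bigr => i _; rewrite mulr_sumr.
by apply: eq_bigr => k _; rewrite mxE mulrCA.
Qed.

Lemma dotv_vertex A C : dotv (vertex A) (vertex C) = #|A :&: C|%:R.
Proof.
rewrite /dotv (eq_bigr (fun i => if i \in A :&: C then 1 else 0)); last first.
  by move=> i _; rewrite !mxE inE; case: (i \in A); case: (i \in C); rewrite ?mul1r ?mul0r.
by rewrite -big_mkcond sumr_const.
Qed.

Lemma vertex_inj : injective vertex.
Proof.
move=> A B eqAB; apply/setP => i; have := congr1 (fun v : row => v 0 i) eqAB.
rewrite /= !mxE; case: (i \in A); case: (i \in B) => // /eqP.
  by rewrite oner_eq0.
by rewrite eq_sym oner_eq0.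
Qed.

Lemma vertex_exchange A B (i j : 'I_(m + r)) :
  i \notin A -> i \in B -> j \in A -> j \notin B ->
  vertex (i |: (A :\ j)) + vertex (j |: (B :\ i)) = vertex A + vertex B.
Proof.
move=> iNA iB jA jNB; have neq_ij : i != j by apply: contraNneq iNA => ->.
apply/rowP => k; rewrite !mxE !inE.
case: (eqVneq k i) => [->|_]; first by rewrite (negbTE iNA) iB (negbTE neq_ij) addr0 add0r.
by case: (eqVneq k j) => [->|_] /=; rewrite ?jA ?(negbTE jNB) ?addr0 ?add0r.
Qed.

Lemma segment_sym (u v x : row) : segment u v x -> segment v u x.
Proof.
case=> t [t0 t1 ->]; exists (1 - t); split; [lra|lra|].
by rewrite addrC; congr (_ + _); congr (_ *: _); ring.
Qed.

Lemma segment_l (u v : row) : segment u v u.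
Proof. by exists 1; rewrite ler01 lexx subrr scale0r addr0 scale1r. Qed.

Lemma segment_vertex A B C t : A != B ->
  vertex C = t *: vertex A + (1 - t) *: vertex B -> C = A \/ C = B.
Proof.
move=> neqAB eqC.
have [i Ai_neq_Bi] : exists i, (i \in A) != (i \in B).
  apply/existsP; apply: contraR neqAB; rewrite negb_exists => /forallP eqAB.
  by apply/eqP/setP => i; apply/eqP; rewrite -[_ == _]negbK eqAB.
have t01 : t = 0 \/ t = 1 -> C = A \/ C = B.
  case=> t01; [right|left]; apply: vertex_inj;
  by rewrite eqC t01 ?subr0 ?subrr !(scale0r, scale1r, add0r, addr0).
have := congr1 (fun v : row => v 0 i) eqC; rewrite /= !mxE.
move: Ai_neq_Bi; case: (i \in A); case: (i \in B) => //= _;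
  rewrite ?mulr1 ?mulr0 ?addr0 ?add0r;
  case: (i \in C) => eCi; apply: t01; [right|left|left|right]; lra.
Qed.

End Vertices.

Section Polytope.
Variables (m r : nat) (R : realFieldType) (P Q : lpath m r).
Implicit Types A B C D : lpath m r.
Local Open Scope ring_scope.
Local Notation vertex := (Defs.vertex m r R).
Local Notation dotv := (Defs.dotv m r R).
Local Notation segment := (Defs.segment m r R).
Local Notation bases := (Defs.bases m r P Q).
Local Notation Pol := (Defs.lpm_polytope m r R P Q).
Local Notation row := 'rV[R]_(m + r).

Lemma polytope_vertex C : C \in bases -> Pol (vertex C).
Proof.
move=> C_in; exists (fun D => (D == C)%:R); split=> [D||]; first by rewrite ler0n.
  by rewrite (bigD1 C) //= eqxx big1 ?addr0 // => D /andP[_ /negbTE->].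
by rewrite (bigD1 C) //= eqxx scale1r big1 ?addr0 // => D /andP[_ /negbTE->]; rewrite scale0r.
Qed.

Lemma polytope_le w y (M : R) :
  Pol y -> (forall C, C \in bases -> dotv w (vertex C) <= M) -> dotv w y <= M.
Proof.
case=> c [c_ge0 c_sum ->] le_M; rewrite dotv_sumr -[M]mul1r -c_sum mulr_suml.
by apply: ler_sum => C C_in; rewrite ler_wpM2l ?le_M.
Qed.

Lemma polytope_segment A B x : A \in bases -> B \in bases -> A != B ->
  segment (vertex A) (vertex B) x -> Pol x.
Proof.
move=> A_in B_in neq_AB [t [t0 t1 ->]].
pose c C := if C == A then t else if C == B then 1 - t else 0.
have cAB : c A = t /\ c B = 1 - t by rewrite /c eqxx eq_sym (negbTE neq_AB) eqxx.
have c0 C : (C != A) && (C != B) -> c C = 0 by rewrite /c => /andP[/negbTE-> /negbTE->].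
exists c; split=> [C||].
- by rewrite /c; case: eqP => _; [|case: eqP => _]; lra.
- by rewrite (bigD2 _ A_in B_in neq_AB) big1 => [|C /andP[_ /c0]]; rewrite ?cAB; lra.
- rewrite (bigD2 _ A_in B_in neq_AB) big1 => [|C /andP[_ /c0->]]; last by rewrite scale0r.
  by case: cAB => -> ->; rewrite addr0.
Qed.

Lemma edge_weight A B C : A \in bases -> B \in bases -> C \in bases ->
  #|A :&: B|.+1 = r ->
  dotv (vertex A + vertex B) (vertex C) <= (r + r.-1)%:R ?= iff (C == A) || (C == B).
Proof.
move=> /basesP[cardA _ _] /basesP[cardB _ _] /basesP[cardC _ _] cardAB.
have {}cardAB : #|A :&: B| = r.-1 by rewrite -[in RHS]cardAB.
rewrite dotvDl !dotv_vertex -natrD leif_nat_r.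
have [->|neq_CA] := eqVneq C A.
  by rewrite setIid setIC cardA cardAB /=; split; [lia | apply/eqP; lia].
have [->|neq_CB] := eqVneq C B.
  by rewrite setIid cardB cardAB orbT; split; [lia | apply/eqP; lia].
rewrite eq_sym in neq_CA; rewrite eq_sym in neq_CB.
have := @cardI_lt _ A C (etrans cardA (esym cardC)) neq_CA.
have := @cardI_lt _ B C (etrans cardB (esym cardC)) neq_CB.
by rewrite cardA cardB; split; [lia | apply/negbTE/eqP; lia].
Qed.

Lemma edge_face A B : A \in bases -> B \in bases -> A != B -> #|A :&: B|.+1 = r ->
  forall x, segment (vertex A) (vertex B) x <->
    Pol x /\ forall y, Pol y -> dotv (vertex A + vertex B) y <= dotv (vertex A + vertex B) x.
Proof.
move=> A_in B_in neq_AB cardAB; set w := vertex A + vertex B; pose M : R := (r + r.-1)%:R.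
have w_le C (C_in : C \in bases) := (edge_weight A_in B_in C_in cardAB).1.
have w_eq C (C_in : C \in bases) := (edge_weight A_in B_in C_in cardAB).2.
have wA : dotv w (vertex A) = M by apply/eqP; rewrite w_eq ?eqxx.
have wB : dotv w (vertex B) = M by apply/eqP; rewrite w_eq ?eqxx ?orbT.
move=> x; split=> [segx|[[c [c_ge0 c_sum x_eq]] x_max]].
  split; first exact: polytope_segment segx.
  move=> y /polytope_le /(_ w_le); case: segx => t [_ _ ->].
  by rewrite dotvDr !dotvZr wA wB -mulrDl subrKC mul1r.
have wx : dotv w x = M.
  have Pol_x : Pol x by exists c.
  apply/eqP; rewrite eq_le (polytope_le Pol_x w_le) -wA x_max //.
  exact: polytope_vertex.
have c0 C : C \in bases -> (C != A) && (C != B) -> c C = 0.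
  move=> C_in; rewrite -negb_or -w_eq // => /eqP neq_M.
  apply/eqP/negPn/negP => cC; apply: neq_M.
  apply: (convex_max_support (f := fun C => dotv w (vertex C)) c_ge0 c_sum) => //.
    by move=> D D_in _; apply: w_le.
  by rewrite -/M -wx x_eq dotv_sumr.
have cAB : c A + c B = 1.
  by rewrite -c_sum (bigD2 _ A_in B_in neq_AB) big1 ?addr0 // => C /andP[]; exact: c0.
exists (c A); split; [exact: c_ge0 | by rewrite -cAB lerDl | ].
rewrite x_eq (bigD2 _ A_in B_in neq_AB) big1 ?addr0 => [|C /andP[C_in /(c0 C C_in)->]].
  by rewrite -cAB [c A + c B]addrC addrK.
by rewrite scale0r.
Qed.

Lemma edge_endpoint_vertex w (F : row -> Prop) (u v : row) :
  (forall x, F x <-> Pol x /\ forall y, Pol y -> dotv w y <= dotv w x) ->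
  (forall x, F x <-> segment u v x) -> u != v ->
  exists2 A, A \in bases & u = vertex A.
Proof.
(* Every vertex in the support of [u] lies on the edge, and [phi] below is
   maximal on the edge only at [u]. *)
move=> faceF segF neq_uv.
have [[c [c_ge0 c_sum u_eq]] u_max] := (faceF u).1 ((segF u).2 (segment_l u v)).
have on_edge C : C \in bases -> c C != 0 -> segment u v (vertex C).
  move=> C_in cC; apply/segF/faceF; split=> [|y Pol_y]; first exact: polytope_vertex.
  rewrite (convex_max_support (f := fun C => dotv w (vertex C)) (M := dotv w u)
            c_ge0 c_sum _ _ C_in cC).
  - exact: u_max.
  - by move=> D D_in _; apply/u_max/polytope_vertex.
  - by rewrite [in RHS]u_eq dotv_sumr.
have [k neq_k] : exists k, u 0 k != v 0 k.
  apply/existsP; apply: contraR neq_uv; rewrite negb_exists => /forallP eq_uv.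
  by apply/eqP/rowP => k; apply/eqP; rewrite -[_ == _]negbK eq_uv.
pose phi (y : row) := (u 0 k - v 0 k) * y 0 k.
have phi_segment y : segment u v y -> phi y <= phi u /\ (phi y = phi u -> y = u).
  case=> t [t0 t1 ->]; rewrite /phi !mxE.
  have sq_gt0 : 0 < (u 0 k - v 0 k) ^+ 2 by rewrite lt_def sqrf_eq0 subr_eq0 neq_k sqr_ge0.
  have -> : (u 0 k - v 0 k) * (t * u 0 k + (1 - t) * v 0 k)
          = (u 0 k - v 0 k) * u 0 k - (1 - t) * (u 0 k - v 0 k) ^+ 2 by ring.
  split=> [|/eqP]; first by rewrite gerBl mulr_ge0 // ?subr_ge0 // ltW.
  rewrite -subr_eq0 addrAC subrr add0r oppr_eq0 mulf_eq0 (gt_eqF sq_gt0) orbF subr_eq0.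
  by move=> /eqP<-; rewrite subrr scale0r addr0 scale1r.
have [C C_in cC] : exists2 C, C \in bases & c C != 0.
  apply/exists_inP; apply: contraLR (oner_neq0 R) => /exists_inPn c0.
  by rewrite negbK -c_sum big1 // => C /c0 /negPn/eqP.
exists C => //; apply/esym/(phi_segment _ (on_edge C C_in cC)).2.
apply: (convex_max_support (f := fun C => phi (vertex C)) c_ge0 c_sum) => //.
  by move=> D D_in cD; apply: (phi_segment _ (on_edge D D_in cD)).1.
have u_k : u 0 k = \sum_(D in bases) c D * vertex D 0 k.
  by rewrite {1}u_eq summxE; apply: eq_bigr => D _; rewrite mxE.
by rewrite /phi [X in _ = _ * X]u_k mulr_sumr; apply: eq_bigr => D _; rewrite mulrCA.
Qed.

End Polytope.

Section Edges.
Variables (m r : nat) (R : realFieldType) (P Q : lpath m r).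
Implicit Types A B C D : lpath m r.
Local Open Scope ring_scope.
Local Notation ht := (Defs.ht m r).
Local Notation vertex := (Defs.vertex m r R).
Local Notation dotv := (Defs.dotv m r R).
Local Notation segment := (Defs.segment m r R).
Local Notation bases := (Defs.bases m r P Q).
Local Notation Pol := (Defs.lpm_polytope m r R P Q).
Local Notation row := 'rV[R]_(m + r).

Definition exchange_closed A B := forall C D, C \in bases -> D \in bases ->
  vertex C + vertex D = vertex A + vertex B -> C = A \/ C = B.

Lemma exchange_closedC A B : exchange_closed A B -> exchange_closed B A.
Proof.
move=> clAB C D C_in D_in eqCD.
by case: (clAB C D C_in D_in); [rewrite eqCD addrC | right | left].
Qed.

Lemma edge_exchange_closed w (F : row -> Prop) A B :
  (forall x, F x <-> Pol x /\ forall y, Pol y -> dotv w y <= dotv w x) ->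
  (forall x, F x <-> segment (vertex A) (vertex B) x) ->
  A != B -> exchange_closed A B.
Proof.
move=> faceF segF neq_AB C D C_in D_in eqCD.
have [PolA maxA] := (faceF _).1 ((segF _).2 (segment_l _ _)).
have [PolB maxB] := (faceF _).1 ((segF _).2 (segment_sym (segment_l (vertex B) (vertex A)))).
have maxC := maxA _ (polytope_vertex R C_in); have maxD := maxA _ (polytope_vertex R D_in).
have eqAB : dotv w (vertex B) = dotv w (vertex A).
  by apply/eqP; rewrite eq_le maxA ?maxB.
have eqC : dotv w (vertex C) = dotv w (vertex A).
  have : dotv w (vertex C) + dotv w (vertex D) = dotv w (vertex A) + dotv w (vertex A).
    by rewrite -dotvDr eqCD dotvDr eqAB.
  by move: maxC maxD; lra.
have /segF[t [_ _ eqCt]] : F (vertex C).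
  apply/faceF; split=> [|y /maxA]; first exact: (polytope_vertex R C_in).
  by rewrite eqC.
exact: segment_vertex neq_AB eqCt.
Qed.

Lemma exchange_closed_ribbon A B i : A \in bases -> B \in bases ->
  exchange_closed A B -> ht A i = ht B i -> ht B i.+1 = (ht A i.+1).+1 ->
  exists j, ribbon A B i j.
Proof.
move=> A_in B_in clAB eq_i ltS.
have /basesP[cardA _ _] := A_in; have /basesP[cardB _ _] := B_in.
have [i' [j' [<- lt_ij memb between]]] := ht_meet_after cardA cardB eq_i ltS.
have [C_in D_in] := exchange_bases A_in B_in lt_ij memb between.
case: memb => iNA iB jA jNB.
case: (clAB _ _ C_in D_in (vertex_exchange R iNA iB jA jNB)) => eqC.
  by move: iNA; rewrite -eqC !inE eqxx.
by exists j'; rewrite -eqC; exact: ribbon_exchange.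
Qed.

Lemma edge_ribbon F : is_edge m r R Pol F ->
  exists A B, [/\ A \in bases, B \in bases, exists i j, ribbon A B i j &
                  forall x, F x <-> segment (vertex A) (vertex B) x].
Proof.
case=> [[w faceF] [u [v [neq_uv segF]]]].
have segF' x : F x <-> segment v u x.
  by split=> [/segF /segment_sym|/segment_sym /segF].
have [A A_in eq_uA] := edge_endpoint_vertex faceF segF neq_uv.
have neq_vu : v != u by rewrite eq_sym.
have [B B_in eq_vB] := edge_endpoint_vertex faceF segF' neq_vu.
subst u v; have neq_AB : A != B by apply: contraNneq neq_uv => ->.
have clAB := edge_exchange_closed faceF segF neq_AB.
have [i [eq_i [ltS|ltS]]] := ht_split neq_AB.
  have [j rAB] := exchange_closed_ribbon A_in B_in clAB eq_i ltS.
  by exists A, B; split=> //; exists i, j.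
have [j rBA] := exchange_closed_ribbon B_in A_in (exchange_closedC clAB) (esym eq_i) ltS.
by exists B, A; split=> //; exists i, j.
Qed.

Lemma ribbon_segment_inj A B A' B' i j i' j' : ribbon A B i j -> ribbon A' B' i' j' ->
  (forall x, segment (vertex A) (vertex B) x <-> segment (vertex A') (vertex B') x) ->
  A = A' /\ B = B'.
Proof.
move=> rAB rAB' eq_seg; have neq_AB := ribbon_neq rAB; have neq_AB' := ribbon_neq rAB'.
have [t [_ _ /(segment_vertex neq_AB')[]eqA]] := (eq_seg _).1 (segment_l _ _);
  have [s [_ _ /(segment_vertex neq_AB')[]eqB]] :=
    (eq_seg _).1 (segment_sym (segment_l (vertex B) (vertex A)));
  subst A B => //; rewrite ?eqxx // in neq_AB.
by rewrite (below_anti (ribbon_below rAB) (ribbon_below rAB')) eqxx in neq_AB.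
Qed.

End Edges.

Section Bottoms.
Variables (m r : nat) (P Q : lpath m r).
Implicit Types A B X Y : lpath m r.
Local Notation ht := (Defs.ht m r).
Local Notation below := (Defs.below m r).
Local Notation bases := (Defs.bases m r P Q).
Local Notation region := (Defs.region m r).
Local Notation label := (Defs.label m r).
Local Notation has_square := (Defs.has_square m r).
Local Notation comp := (Defs.comp m r).

Lemma connected_region_interval A B lo hi k : #|A| = r -> #|B| = r ->
  connected_boxes m r (region A B) -> ht A lo < ht B lo -> ht A hi < ht B hi ->
  lo <= k <= hi -> ht A k < ht B k.
Proof.
move=> cardA cardB /andP[_ conn] lt_lo lt_hi /andP[le_lo le_hi].
rewrite ltnNge; apply/negP => le_BA.
have noK z : z \in region A B -> label z != k.
  by move=> /region_ht_lt; apply: contraTneq => ->; rewrite -leqNgt.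
have [a a_in [lab_a _]] := box_at cardA cardB lt_lo.
have [b b_in [lab_b _]] := box_at cardA cardB lt_hi.
move: conn => /forallP/(_ a)/implyP/(_ a_in)/forallP/(_ b)/implyP/(_ b_in).
move=> /connectP[p p_path b_last].
have lt_ak : label a < k.
  by rewrite lab_a ltn_neqAle le_lo andbT; apply: contraTneq le_BA => <-; rewrite -ltnNge.
have := path_label_lt noK lt_ak p_path; rewrite -b_last lab_b.
by apply/negP; rewrite -leqNgt.
Qed.

Lemma region_ribbon A B : #|A| = r -> #|B| = r -> below A B ->
  ~~ has_square (region A B) -> connected_boxes m r (region A B) ->
  exists i j, ribbon A B i j.
Proof.
move=> cardA cardB /belowP AB noSq conn.
have le_AB k : ht A k <= ht B k.
  have [le_kn|lt_nk] := leqP k (m + r); first exact: AB.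
  by rewrite !ht_end ?cardA ?cardB // ltnW.
have ex_lt : exists k, ht A k < ht B k.
  by case/andP: conn => /set0Pn[b /region_ht_lt lt_b] _; exists (label b).
have bounded k : ht A k < ht B k -> k <= m + r.
  by move/(ht_lt_bound cardA cardB)/ltnW.
have [lo lt_lo min_lo] := ex_minnP ex_lt.
have [hi lt_hi max_hi] := ex_maxnP ex_lt bounded.
have lo_gt0 : 0 < lo by move: lt_lo; case: (lo) => //; rewrite !ht0.
have mid k : lo <= k <= hi -> ht A k < ht B k.
  exact: connected_region_interval cardA cardB conn lt_lo lt_hi.
exists lo.-1, hi; split.
  by rewrite (ht_lt_bound cardA cardB lt_hi) andbT prednK ?(min_lo _ lt_hi) // ltnS.
move=> k; rewrite prednK //; have [lt_k|le_k] := ltnP (ht A k) (ht B k).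
  have := no_square_ht k noSq cardA cardB.
  by rewrite (min_lo k lt_k) (max_hi k lt_k) addn1; lia.
case/boolP: (lo <= k <= hi) => [/mid|_]; first by rewrite ltnNge le_k.
by rewrite addn0; apply/eqP; rewrite eqn_leq le_k le_AB.
Qed.

Lemma band_single_block A B tau :
  block_tiled_band m r P Q A B tau -> #|tau| = 1 ->
  [/\ tau = [set region A B], A \in bases, B \in bases & exists i j, ribbon A B i j].
Proof.
case=> [[[cardA cardB PA BQ AB] _ [blocks _ cover] _] noSq] /eqP/cards1P[S eq_tau].
have eqS : S = region A B by rewrite -cover eq_tau big_set1.
have [_ conn _ _] : is_block m r P Q S by apply: blocks; rewrite eq_tau set11.
rewrite eqS in conn.
split; first by rewrite eq_tau eqS.
- by apply/basesP; split=> //; apply: below_trans AB BQ.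
- by apply/basesP; split=> //; apply: below_trans PA AB.
- exact: region_ribbon cardA cardB AB noSq conn.
Qed.

Lemma ribbon_band A B i j : A \in bases -> B \in bases -> ribbon A B i j ->
  block_tiled_band m r P Q A B [set region A B].
Proof.
move=> /basesP[cardA PA _] /basesP[cardB _ BQ] rAB; have [/andP[lt_ij _] _] := rAB.
have noSq := ribbon_no_square rAB.
split=> //; split.
- by split=> //; apply: ribbon_below rAB.
- move=> a b [/andP[le_ab le_bn] eq_ab [a0|neq_a] [bn|neq_b]].
  + by exists 0; rewrite a0 leq0n; split=> //; left.
  + by exists 0; rewrite a0 leq0n; split=> //; left.
  + by exists b; rewrite le_ab leqnn; split=> //; right; left.
  move: neq_a neq_b => /eqP; rewrite (ribbon_ht_eq _ rAB) negbK => /andP[lt_ia _].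
  move/eqP; rewrite (ribbon_ht_eq _ rAB) negbK => /andP[_ le_bj].
  have eq_a : ht A a = ht B a by apply: eq_ab; rewrite leqnn.
  have in_a : i < a <= j by apply/andP; split; lia.
  by move: (ribbon_ht_eq a rAB); rewrite eq_a eqxx in_a.
- split=> [S|S T|]; rewrite ?big_set1 //; last by rewrite !inE => /eqP-> /eqP->; rewrite eqxx.
  rewrite inE => /eqP->; split.
  + exact: region_sub PA BQ.
  + exact: ribbon_connected cardA cardB rAB.
  + by exists A, B; split=> //; apply: ribbon_below rAB.
  + exact: noSq.
- by move=> S T; rewrite !inE => /eqP-> /eqP-> _; exists 0%R => x y; rewrite subr0 addr0.
Qed.

Lemma comp_inj X Y a b a' b' : a <= b -> a' <= b' ->
  comp X a b = comp Y a' b' ->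
  [/\ a = a', b = b' & forall k, a <= k <= b -> ht X k = ht Y k].
Proof.
move=> le_ab le_ab' eq_comp.
have nth_comp Z c d k : k <= d - c ->
    nth (0, 0) (comp Z c d) k = (c + k - ht Z (c + k), ht Z (c + k)).
  by move=> le_k; rewrite (nth_map 0) ?size_iota ?ltnS // nth_iota ?ltnS.
have := congr1 size eq_comp; rewrite !size_map !size_iota => /succn_inj eq_len.
have eq_nth k : nth (0, 0) (comp X a b) k = nth (0, 0) (comp Y a' b') k by rewrite eq_comp.
have := eq_nth 0; rewrite !nth_comp // !addn0 => -[eq_x eq_y].
have eq_a : a = a' by have := ht_le X a; have := ht_le Y a'; lia.
subst a'; have eq_b : b = b' by lia.
subst b'; split=> // k /andP[le_ak le_kb].
by have := eq_nth (k - a); rewrite !nth_comp ?leq_sub2r // subnKC // => -[].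
Qed.

Lemma family_maxint A B tau A' B' tau' a b :
  same_family m r A B tau A' B' tau' -> maxint m r A B a b ->
  maxint m r A' B' a b /\ forall k, a <= k <= b -> ht A' k = ht A k.
Proof.
move=> [fam _] mAB; have [/andP[le_ab _] _ _ _] := mAB.
have [a' [b' [mAB' eq_comp]]] :
    exists a' b', maxint m r A' B' a' b' /\ comp A a b = comp A' a' b'.
  by apply/fam; exists a, b.
have [/andP[le_ab' _] _ _ _] := mAB'.
have [eq_a eq_b eq_ht] := comp_inj le_ab le_ab' eq_comp.
by subst a' b'; split=> // k /eq_ht.
Qed.

Lemma ribbon_maxint_l A B i j : ribbon A B i j -> maxint m r A B 0 i.
Proof.
move=> rAB; have [/andP[lt_ij lt_jn] _] := rAB; split.
- by rewrite leq0n ltnW ?(ltn_trans lt_ij).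
- by move=> k /andP[_ le_ki]; apply/eqP; rewrite (ribbon_ht_eq _ rAB) ltnNge le_ki.
- by left.
- by right; apply/eqP; rewrite (ribbon_ht_eq _ rAB) ltnSn lt_ij.
Qed.

Lemma ribbon_maxint_r A B i j : ribbon A B i j -> maxint m r A B j.+1 (m + r).
Proof.
move=> rAB; have [/andP[lt_ij lt_jn] _] := rAB; split.
- by rewrite lt_jn leqnn.
- move=> k /andP[lt_jk _]; apply/eqP.
  by rewrite (ribbon_ht_eq _ rAB) [k <= j]leqNgt lt_jk andbF.
- by right; apply/eqP; rewrite (ribbon_ht_eq _ rAB) lt_ij leqnn.
- by left.
Qed.

Lemma ribbon_family_ht A B i j tau A' B' tau' k :
  ribbon A B i j -> same_family m r A B tau A' B' tau' ->
  k <= m + r -> ~~ (i < k <= j) -> ht A' k = ht A k /\ ht B' k = ht B k.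
Proof.
move=> rAB fam le_kn out_k.
have eq_AB : ht A k = ht B k by apply/eqP; rewrite (ribbon_ht_eq _ rAB).
have [le_ki|lt_ik] := leqP k i.
  have [[_ eq_AB' _ _] eq_A] := family_maxint fam (ribbon_maxint_l rAB).
  have eqA : ht A' k = ht A k by apply: eq_A; rewrite le_ki.
  by rewrite -eq_AB -eq_AB' ?le_ki.
have lt_jk : j < k by move: out_k; rewrite lt_ik /= -ltnNge.
have [[_ eq_AB' _ _] eq_A] := family_maxint fam (ribbon_maxint_r rAB).
have eqA : ht A' k = ht A k by apply: eq_A; rewrite lt_jk.
by rewrite -eq_AB -eq_AB' ?lt_jk.
Qed.

Lemma ribbon_clone_sub A B i j A' B' tau' : #|A| = r -> #|B| = r -> ribbon A B i j ->
  block_tiled_band m r P Q A' B' tau' ->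
  same_family m r A B [set region A B] A' B' tau' -> region A B \subset region A' B'.
Proof.
move=> cardA cardB rAB [[_ _ [_ _ cover'] _] _] fam; have [/andP[lt_ij lt_jn] htB] := rAB.
have [_ [clones _]] := fam; have [S' S'_in [d clone_d]] := clones _ (set11 _).
have S'_sub : S' \subset region A' B' by rewrite -cover'; apply: bigcup_sup.
have [eqA' eqB'] : ht A' i = ht A i /\ ht B' i = ht B i.
  by apply: ribbon_family_ht rAB fam _ _; rewrite ?ltnn // ltnW ?(ltn_trans lt_ij).
have ltS : ht A i.+1 < ht B i.+1 by rewrite htB ltnSn lt_ij addn1.
have [[x y] b_in [lab_b /= y_eq]] := box_at cardA cardB ltS.
(* the translate of [(x, y)] by [(d, -d)] lies in [region A' B'] on the
   anti-diagonal [i + 1], where that region is reduced to the row [ht A i] *)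
have : inZ m r S' (x%:Z + d)%R (y%:Z - d)%R.
  by rewrite clone_d addrK subrK; apply/existsP; exists (x, y); rewrite b_in !eqxx.
case/existsP => -[x' y'] /andP[/(subsetP S'_sub) c_in /andP[/eqP /= x'_eq /eqP /= y'_eq]].
move: c_in lab_b; rewrite in_region /label /= => /andP[A'c cB'] lab_b.
have lab_c : (x' + y').+1 = i.+1 by lia.
rewrite lab_c in A'c cB'.
have := htB i; have := htB i.+1; rewrite ltnn ltnSn lt_ij /= => htBS htBi.
have := ht_mono A (leqnSn i); have := ht_mono A' (leqnSn i).
have := htS_le B i; have := htS_le B' i => leB' leB leA' leA.
have d0 : d = 0%R by lia.
apply/subsetP => z z_in; apply: (subsetP S'_sub).
have : inZ m r S' z.1 z.2.
  by rewrite clone_d d0 subr0 addr0; apply/existsP; exists z; rewrite z_in !eqxx.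
by case/existsP => w /andP[w_in /andP[/eqP [z1] /eqP [z2]]]; rewrite (box_eq z1 z2).
Qed.

Lemma ribbon_bottom A B i j : A \in bases -> B \in bases -> ribbon A B i j ->
  block_tiled_bottom m r P Q A B [set region A B].
Proof.
move=> A_in B_in rAB; split; first exact: ribbon_band A_in B_in rAB.
move=> A' B' tau' band' fam.
have /basesP[cardA _ _] := A_in; have /basesP[cardB _ _] := B_in.
have sub := ribbon_clone_sub cardA cardB rAB band' fam.
have [[[cardA' cardB' _ _ _] _ _ _] noSq'] := band'; have [_ htB] := rAB.
suff below_k k : k <= m + r -> ht A k <= ht A' k /\ ht B k <= ht B' k.
  by split; apply/belowP => k /below_k[].
move=> le_kn; case/boolP: (i < k <= j) => in_k; last first.
  by have [-> ->] := ribbon_family_ht rAB fam le_kn in_k.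
have ltk : ht A k < ht B k by rewrite htB in_k addn1.
have [b /(subsetP sub)] := box_at cardA cardB ltk.
rewrite in_region => /andP[A'b bB'] [lab b2]; rewrite lab b2 in A'b bB'.
by have := no_square_ht k noSq' cardA' cardB'; rewrite htB in_k; lia.
Qed.

End Bottoms.

Theorem proposition5p8 (R : realFieldType) (m r : nat) (P Q : lpath m r) :
  #|P| = r -> #|Q| = r -> below m r P Q -> connected_PQ m r P Q ->
  [/\ (forall (A B : lpath m r) (tau : {set {set box m r}}),
         block_tiled_bottom m r P Q A B tau -> #|tau| = 1 ->
         is_edge m r R (lpm_polytope m r R P Q)
                 (segment m r R (vertex m r R A) (vertex m r R B))),
      (forall F, is_edge m r R (lpm_polytope m r R P Q) F ->
         exists (A B : lpath m r) (tau : {set {set box m r}}),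
           [/\ block_tiled_bottom m r P Q A B tau, #|tau| = 1 &
               forall x, F x <-> segment m r R (vertex m r R A) (vertex m r R B) x]) &
      (forall (A B A' B' : lpath m r) (tau tau' : {set {set box m r}}),
         block_tiled_bottom m r P Q A B tau -> #|tau| = 1 ->
         block_tiled_bottom m r P Q A' B' tau' -> #|tau'| = 1 ->
         (forall x, segment m r R (vertex m r R A) (vertex m r R B) x <->
                    segment m r R (vertex m r R A') (vertex m r R B') x) ->
         [/\ A = A', B = B' & tau = tau'])].
Proof.
move=> _ _ _ _; split.
- move=> A B tau [band _] /(band_single_block band)[_ A_in B_in [i [j rAB]]].
  have neq_AB := ribbon_neq rAB; have /basesP[cardA _ _] := A_in.
  split; first by exists (vertex m r R A + vertex m r R B)%R; apply: edge_face;
    rewrite ?(ribbon_cardI rAB).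
  exists (vertex m r R A), (vertex m r R B); split=> //.
  by apply: contra neq_AB => /eqP/vertex_inj->.
- move=> F /edge_ribbon[A [B [A_in B_in [i [j rAB]] segF]]].
  exists A, B, [set region m r A B]; split=> //; last exact: cards1.
  exact: ribbon_bottom A_in B_in rAB.
- move=> A B A' B' tau tau' [band _] /(band_single_block band)[-> _ _ [i [j rAB]]].
  move=> [band' _] /(band_single_block band')[-> _ _ [i' [j' rAB']]] eq_seg.
  by have [<- <-] := ribbon_segment_inj rAB rAB' eq_seg.
Qed.
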